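(* Let $(G,M,\Delta)$ be a Garside structure, $(H,N,\delta)$ a parabolic substructure, and $T$ the set of $(H,N)$-reduced elements of $G$. Put $\omega=\delta^{-1}\Delta$ and $\Phi(\alpha)=\Delta\alpha\Delta^{-1}$. Let $\theta\in T\setminus M$ with right $\Delta$-form $\theta=c\Delta^{-p}$, $p\ge1$, and let $\beta\in H\setminus N$ with right $\delta$-form $\beta=b\delta^{-k}$, $k\ge1$ (that is, $b\in N$ and $\delta\not\le_L b$). Then the right $\Delta$-form of $\beta\theta$ is $\beta\theta=\big(b\,\omega_1\cdots\omega_k\,\Phi^{-k}(c)\big)\Delta^{-k-p}$, where $\omega_i=\Phi^{-i+1}(\omega)$ for $i\in\{1,\dots,k\}$.
   Context: Let $G$ be a group and $M$ a submonoid with $M\cap M^{-1}=\{1\}$. Define $\alpha\le_L\beta$ iff $\alpha^{-1}\beta\in M$, and $\alpha\le_R\beta$ iff $\beta\alpha^{-1}\in M$. For $a\in M$ let $\mathrm{Div}_L(a)=\{b\in M: b\le_L a\}$, $\mathrm{Div}_R(a)=\{b\in M: b\le_R a\}$; $a$ is balanced if these coincide, and then $\mathrm{Div}(a)$ denotes this set. $M$ is Noetherian if each $a\in M$ admits an $n$ such that $a$ is not a product of more than $n$ non-trivial factors. A Garside structure $(G,M,\Delta)$: $\Delta\in M$ balanced, $M$ Noetherian, $\mathrm{Div}(\Delta)$ finite and generating $M$ as a monoid and $G$ as a group, $(G,\le_L)$ a lattice with meet $\wedge_L$. A parabolic substructure $(H,N,\delta)$: $\delta\in M$ balanced, $H$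 (resp. $N$) the subgroup (resp. submonoid) generated by $\mathrm{Div}(\delta)$, and $\mathrm{Div}(\delta)=\mathrm{Div}(\Delta)\cap N$; it is assumed $H\ne\{1\}$. $a\in M$ is unmovable if $\Delta\not\le_L a$; every $\alpha\in G$ has a unique right $\Delta$-form $\alpha=a\Delta^p$ ($a\in M$ unmovable, $p\in\mathbb Z$); analogously each $\beta\in H$ has a unique right $\delta$-form $\beta=b\delta^{q}$ with $b\in N$, $\delta\not\le_L b$, $q\in\mathbb Z$. $a\in M$ is $N$-reduced if $a\wedge_L\delta=1$. $\alpha$ with right $\Delta$-form $a\Delta^p$ is $(H,N)$-reduced if $a$ is $N$-reduced and either $p=0$, or $p<0$ and $\omega\not\le_L a$. *)

From mathcomp Require Import all_boot.
From Stdlib Require Import ZArith.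

Set Implicit Arguments.
Unset Strict Implicit.
Unset Printing Implicit Defensive.

Local Open Scope group_scope.

Section Garside.
Variable G : groupType.

Definition zpowg (x : G) (p : Z) : G :=
  match p with
  | Z0 => 1
  | Zpos n => x ^+ Pos.to_nat n
  | Zneg n => x ^- Pos.to_nat n
  end.

Definition prodl (s : seq G) : G := foldr (fun x acc => x * acc) 1 s.

Variable M : G -> Prop.

Definition pos_submonoid : Prop :=
  [/\ M 1, (forall x y, M x -> M y -> M (x * y)) &
      (forall x, M x -> M x^-1 -> x = 1)].

Definition leL (x y : G) : Prop := M (x^-1 * y).
Definition leR (x y : G) : Prop := M (y * x^-1).

Definition DivL (a : G) (b : G) : Prop := M b /\ leL b a.
Definition DivR (a : G) (b : G) : Prop := M b /\ leR b a.

Definition balanced (a : G) : Prop := M a /\ (forall b, DivL a b <-> DivR a b).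

(* Div(a) for a balanced (we use Div_L) *)
Definition Div (a : G) (b : G) : Prop := DivL a b.

Definition noetherian : Prop :=
  forall a, M a -> exists n : nat, forall s : seq G,
    (forall x, x \in s -> M x /\ x <> 1) -> prodl s = a -> size s <= n.

Definition gen_monoid (D : G -> Prop) (x : G) : Prop :=
  exists s : seq G, (forall y, y \in s -> D y) /\ x = prodl s.

Definition gen_group (D : G -> Prop) (x : G) : Prop :=
  exists s : seq (bool * G), (forall e, e \in s -> D e.2) /\
    x = prodl [seq (if e.1 then e.2 else e.2^-1) | e <- s].

Definition finite_set (D : G -> Prop) : Prop :=
  exists s : seq G, forall x, D x <-> x \in s.

Definition is_meetL (x y m : G) : Prop :=
  [/\ leL m x, leL m y & forall z, leL z x -> leL z y -> leL z m].
Definition is_joinL (x y j : G) : Prop :=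
  [/\ leL x j, leL y j & forall z, leL x z -> leL y z -> leL j z].

Definition lattice_L : Prop :=
  forall x y, (exists m, is_meetL x y m) /\ (exists j, is_joinL x y j).

Definition garside (Delta : G) : Prop :=
  pos_submonoid /\ balanced Delta /\ noetherian /\ finite_set (Div Delta) /\
  (forall x, M x <-> gen_monoid (Div Delta) x) /\
  (forall x, gen_group (Div Delta) x) /\ lattice_L.

Definition parabolic (Delta : G) (H N : G -> Prop) (delta : G) : Prop :=
  [/\ balanced delta,
      (forall x, H x <-> gen_group (Div delta) x),
      (forall x, N x <-> gen_monoid (Div delta) x),
      (forall x, Div delta x <-> (Div Delta x /\ N x)) &
      (exists x, H x /\ x <> 1)].

Definition unmovable (Delta a : G) : Prop := ~ leL Delta a.

Definition right_form (Delta alpha a : G) (p : Z) : Prop :=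
  [/\ M a, unmovable Delta a & alpha = a * zpowg Delta p].

Definition right_form_N (N : G -> Prop) (delta beta b : G) (q : Z) : Prop :=
  [/\ N b, ~ leL delta b & beta = b * zpowg delta q].

Definition N_reduced (delta a : G) : Prop := M a /\ is_meetL a delta 1.

Definition omega (Delta delta : G) : G := delta^-1 * Delta.

Definition HN_reduced (Delta delta alpha : G) : Prop :=
  exists a p, right_form Delta alpha a p /\ N_reduced delta a /\
    (p = Z0 \/ ((p < 0)%Z /\ ~ leL (omega Delta delta) a)).

Definition Phi_pow (Delta : G) (n : Z) (alpha : G) : G :=
  zpowg Delta n * alpha * zpowg Delta (- n).

Definition omega_i (Delta delta : G) (i : nat) : G :=
  Phi_pow Delta (1 - Z.of_nat i)%Z (omega Delta delta).

Definition omega_prod (Delta delta : G) (k : nat) : G :=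
  prodl [seq omega_i Delta delta i | i <- iota 1 k].

End Garside.

From mathcomp Require Import all_boot.
From Stdlib Require Import ZArith Lia.

(* With [twist n c = delta^-n * c * Delta^n], which equals
   [omega_1 * ... * omega_n * Phi^-n(c)], one has
   [beta * theta = b * twist k c * Delta^-(k+p)], so the claim is that
   [b * twist k c] is an unmovable element of [M].
   Uniqueness of right Delta-forms makes [c] N-reduced, and N-reducedness is
   preserved by [twist 1 = fun v => omega * Phi^-1(v)]: this uses the lattice
   structure, the invariance of [M] under [Phi] and [delta /\ omega = 1].
   Finally, if [Delta <= b * twist 1 v] with [v] N-reduced, conjugating by
   [Delta] shows [delta * b^-1 <= v], so [b * delta^-1] lies in [M], hence in
   [N] since [N] is closed under right quotients by divisors of [delta];
   therefore [delta <= b], contradicting the right delta-form of [beta]. *)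

Set Implicit Arguments.
Unset Strict Implicit.
Unset Printing Implicit Defensive.

Local Open Scope group_scope.

Lemma prodlE (G : groupType) (s : seq G) : prodl s = \prod_(x <- s) x.
Proof. by rewrite unlock. Qed.

Lemma prodl_rcons (G : groupType) (s : seq G) x : prodl (rcons s x) = prodl s * x.
Proof. by rewrite !prodlE -cats1 big_cat big_seq1. Qed.

Section GeneratedMonoid.
Variables (G : groupType) (D : G -> Prop).

Lemma gen_monoid1 : gen_monoid D 1.
Proof. by exists [::]. Qed.

Lemma gen_monoid_gen x : D x -> gen_monoid D x.
Proof. by move=> Dx; exists [:: x]; rewrite /= mulg1; split=> // y /[!inE] /eqP ->. Qed.

Lemma gen_monoidM x y : gen_monoid D x -> gen_monoid D y -> gen_monoid D (x * y).
Proof.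
move=> [s [sD ->]] [t [tD ->]]; exists (s ++ t); rewrite !prodlE big_cat.
by split=> // z /[!mem_cat] /orP[/sD | /tD].
Qed.

Lemma gen_monoidS (E : G -> Prop) x :
  (forall y, D y -> E y) -> gen_monoid D x -> gen_monoid E x.
Proof. by move=> DE [s [sD ->]]; exists s; split=> // y /sD /DE. Qed.

Lemma gen_monoid_conj z x :
  (forall y, D y -> D (y ^ z)) -> gen_monoid D x -> gen_monoid D (x ^ z).
Proof.
move=> Dz [s [sD ->]]; exists [seq y ^ z | y <- s].
rewrite !prodlE conjg_prod big_map; split=> // _ /mapP[y /sD Dy ->].
exact: Dz.
Qed.

End GeneratedMonoid.

Section PositiveCone.
Variables (G : groupType) (M : G -> Prop).

Lemma leL_mul2l g x y : leL M (g * x) (g * y) <-> leL M x y.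
Proof. by rewrite /leL invgM -mulgA mulKg. Qed.

Lemma leL1x x : leL M 1 x <-> M x.
Proof. by rewrite /leL invg1 mul1g. Qed.

Lemma leLx1 x : leL M x 1 <-> M x^-1.
Proof. by rewrite /leL mulg1. Qed.

Hypothesis posM : pos_submonoid M.

Lemma pos_submonoid1 : M 1.
Proof. by case: posM. Qed.

Lemma pos_submonoidM x y : M x -> M y -> M (x * y).
Proof. by case: posM => _ + _; apply. Qed.

Lemma pos_submonoid_anti x : M x -> M x^-1 -> x = 1.
Proof. by case: posM => _ _; apply. Qed.

Lemma leL_refl x : leL M x x.
Proof. by rewrite /leL mulVg; exact: pos_submonoid1. Qed.

Lemma leL_trans x y z : leL M x y -> leL M y z -> leL M x z.
Proof. by rewrite /leL => /pos_submonoidM /[apply]; rewrite mulgA mulgK. Qed.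

Lemma Div_leL d x y : M x -> leL M x y -> Div M d y -> Div M d x.
Proof. by move=> Mx xy [_ yd]; split=> //; exact: leL_trans yd. Qed.

Lemma balanced_Div_conj d y : balanced M d -> Div M d y -> Div M d (y ^ d).
Proof.
move=> [Md DivLR] [My yd]; apply/DivLR.
have [_ y'd] : DivL M d (y^-1 * d).
  by apply/DivLR; split=> //; rewrite /leR invgM invgK mulgA mulgV mul1g.
move: y'd; rewrite /leL invgM invgK => yJ.
by split; rewrite /leR conjgE ?mulgA // !invgM invgK !mulgA mulgV mul1g.
Qed.

Lemma balanced_Div_conjV d y : balanced M d -> Div M d y -> Div M d (y ^ d^-1).
Proof.
move=> [Md DivLR] /DivLR [My yd].
have [_ y'd] : DivR M d (d * y^-1).
  by apply/DivLR; split=> //; rewrite /leL invgM invgK mulgVK.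
move: y'd; rewrite /leR invgM invgK mulgA => yJ.
by split; rewrite /leL conjgE invgK ?mulgA // !invgM !invgK !mulgA mulgVK.
Qed.

End PositiveCone.

Section IntegerPowers.
Variable G : groupType.

Lemma zpowg_nat (x : G) n : zpowg x (Z.of_nat n) = x ^+ n.
Proof. by case: n => [|n] //=; rewrite SuccNat2Pos.id_succ. Qed.

Lemma zpowg_opp_nat (x : G) n : zpowg x (- Z.of_nat n) = x ^- n.
Proof. by case: n => [|n] /=; rewrite ?invg1 ?SuccNat2Pos.id_succ. Qed.

Lemma zpowgS (x : G) p : zpowg x (Z.succ p) = x * zpowg x p.
Proof.
case: p => [|n|n]; first by rewrite /= mulg1.
  by rewrite /= Pos.add_1_r Pos2Nat.inj_succ expgS.
case: (Pos.succ_pred_or n) => [-> | <-]; first by rewrite mulgV.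
move: (Pos.pred n) => m; have -> : Z.succ (Zneg (Pos.succ m)) = Zneg m by lia.
by rewrite /= Pos2Nat.inj_succ expgSr invgM mulVKg.
Qed.

Lemma zpowg_add_nat (x : G) n p : zpowg x (Z.of_nat n + p) = x ^+ n * zpowg x p.
Proof.
elim: n => [|n IH]; first by rewrite mul1g.
by rewrite Nat2Z.inj_succ Z.add_succ_l zpowgS IH expgS mulgA.
Qed.

Lemma Phi_pow_opp_nat (x y : G) n : Phi_pow x (- Z.of_nat n) y = y ^ (x ^+ n).
Proof. by rewrite /Phi_pow Z.opp_involutive zpowg_opp_nat zpowg_nat conjgE mulgA. Qed.

End IntegerPowers.

Section Twist.
Variables (G : groupType) (Delta delta : G).

Definition twist n (c : G) := delta ^- n * c * Delta ^+ n.

Lemma twistD n m c : twist (n + m) c = twist m (twist n c).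
Proof. by rewrite /twist !expgnDr invgM !mulgA. Qed.

Lemma omega_iE n : omega_i Delta delta n.+1 = omega Delta delta ^ (Delta ^+ n).
Proof. by rewrite /omega_i (_ : 1 - _ = - Z.of_nat n)%Z ?Phi_pow_opp_nat //; lia. Qed.

Lemma omega_prodS k :
  omega_prod Delta delta k.+1 = omega_prod Delta delta k * omega Delta delta ^ (Delta ^+ k).
Proof.
by rewrite /omega_prod -[k.+1]addn1 iotaD map_cat !prodlE big_cat /= big_seq1 add1n omega_iE.
Qed.

Lemma omega_prod_conj k c : omega_prod Delta delta k * c ^ (Delta ^+ k) = twist k c.
Proof.
elim: k c => [|k IH] c; first by rewrite /twist /omega_prod /= conjg1 invg1 mul1g mulg1.
rewrite omega_prodS -mulgA expgS conjgM -conjMg IH -add1n twistD.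
by rewrite /twist /omega conjgE !expg1 !mulgA mulgK.
Qed.

End Twist.

Section Garside.
Variables (G : groupType) (M H N : G -> Prop) (Delta delta : G).
Hypotheses (gar : garside M Delta) (par : parabolic M Delta H N delta).

Local Notation omega := (omega Delta delta).
Local Notation twist := (twist Delta delta).

Lemma garside_pos : pos_submonoid M.
Proof. by case: gar. Qed.

Let posM := garside_pos.
Let M_mul := pos_submonoidM posM.
Let leL_trans := leL_trans posM.

Lemma garside_gen x : M x <-> gen_monoid (Div M Delta) x.
Proof. by case: gar => _ [_ [_ [_ []]]]. Qed.

Lemma garside_balanced : balanced M Delta.
Proof. by case: gar => _ []. Qed.

Lemma garside_lattice : lattice_L M.
Proof. by case: gar => _ [_ [_ [_ [_ []]]]]. Qed.

Lemma M_conjDelta x : M (x ^ Delta) <-> M x.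
Proof.
have closed z y : (forall u, Div M Delta u -> Div M Delta (u ^ z)) -> M y -> M (y ^ z).
  by move=> Dz /garside_gen My; apply/garside_gen; exact: gen_monoid_conj.
split=> [/(closed Delta^-1) | /(closed Delta)]; rewrite ?conjgK; apply=> u.
  exact: balanced_Div_conjV garside_balanced.
exact: balanced_Div_conj garside_balanced.
Qed.

Lemma leL_conjDelta x y : leL M x (y ^ Delta) <-> leL M (x ^ Delta^-1) y.
Proof.
rewrite /leL; have -> : x^-1 * y ^ Delta = ((x ^ Delta^-1)^-1 * y) ^ Delta.
  by rewrite conjMg conjVg conjgKV.
exact: M_conjDelta.
Qed.

Lemma parabolic_gen x : N x <-> gen_monoid (Div M delta) x.
Proof. by case: par. Qed.

Lemma parabolic_balanced : balanced M delta.
Proof. by case: par. Qed.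

Lemma Div_parabolic x : Div M delta x <-> Div M Delta x /\ N x.
Proof. by case: par. Qed.

Lemma parabolic1 : N 1.
Proof. exact/parabolic_gen/gen_monoid1. Qed.

Lemma parabolicM x y : N x -> N y -> N (x * y).
Proof. by move=> /parabolic_gen Nx /parabolic_gen Ny; apply/parabolic_gen/gen_monoidM. Qed.

Lemma parabolic_Div x : Div M delta x -> N x.
Proof. by move=> Dx; exact/parabolic_gen/gen_monoid_gen. Qed.

Lemma parabolic_sub x : N x -> M x.
Proof.
move=> /parabolic_gen Nx; apply/garside_gen; apply: gen_monoidS Nx => y.
by case/Div_parabolic.
Qed.

Lemma parabolic_conj x : N x -> N (x ^ delta).
Proof.
move=> /parabolic_gen Nx; apply/parabolic_gen; apply: gen_monoid_conj Nx => y.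
exact: balanced_Div_conj parabolic_balanced.
Qed.

Lemma Div_delta_delta : Div M delta delta.
Proof. by case: parabolic_balanced => Md _; split=> //; exact: leL_refl. Qed.

Lemma M_delta : M delta.
Proof. by case: Div_delta_delta. Qed.

Lemma leL_delta_Delta : leL M delta Delta.
Proof. by case: (Div_parabolic delta) => /(_ Div_delta_delta) [[]]. Qed.

Lemma M_omega : M omega.
Proof. exact: leL_delta_Delta. Qed.

Lemma leL_omega_Delta : leL M omega Delta.
Proof.
by rewrite /leL /omega invgM invgK -mulgA -conjgE M_conjDelta; exact: M_delta.
Qed.

(* The meet [m] of [delta] and [omega] is trivial because [delta * m] divides
   [Delta] and lies in [N], hence divides [delta]. *)
Lemma meet_delta_omega z : leL M z delta -> leL M z omega -> leL M z 1.
Proof.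
move=> z_delta z_omega.
have [[m [m_delta m_omega m_glb]] _] := garside_lattice delta omega.
have Mm : M m by apply/leL1x/m_glb; apply/leL1x; [exact: M_delta | exact: M_omega].
have Nm : N m by apply: parabolic_Div.
have Div_dm : Div M delta (delta * m).
  apply/Div_parabolic; split; last exact/parabolicM/Nm/parabolic_Div/Div_delta_delta.
  split; first exact: M_mul M_delta Mm.
  by move: m_omega; rewrite -(leL_mul2l _ delta) /omega mulVKg.
apply: leL_trans (m_glb z z_delta z_omega) _; apply/leLx1.
by case: Div_dm => _; rewrite /leL invgM mulgVK.
Qed.

(* Induct on a factorisation [a * d = s * x] into divisors of [delta]: with
   [m] the left meet of [d^-1] and [x^-1], [m^-1] is a common right multiple of
   [d] and [x] dividing [delta], and [a * d * m] has the shorter factorisation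
   [s * (m^-1 * x^-1)]. *)
Lemma parabolic_divr a d : M a -> Div M delta d -> N (a * d) -> N a.
Proof.
move=> + + /parabolic_gen [s [sD]].
elim/last_ind: s sD a d => [|s x IH] sD a d Ma Dd.
  move=> /= /mulg1_eq ad; suff -> : a = 1 by exact: parabolic1.
  by apply: (pos_submonoid_anti posM Ma); rewrite ad; case: Dd.
rewrite prodl_rcons => ad_sx.
have Dx : Div M delta x by apply: sD; rewrite mem_rcons mem_head.
have Ds y : y \in s -> Div M delta y.
  by move=> y_s; apply: sD; rewrite mem_rcons in_cons y_s orbT.
have [[m [m_d m_x m_glb]] _] := garside_lattice d^-1 x^-1.
have delta_m : leL M delta^-1 m.
  apply: m_glb; rewrite /leL invgK.
    by case: (proj2 parabolic_balanced d) => /(_ Dd) [].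
  by case: (proj2 parabolic_balanced x) => /(_ Dx) [].
have ad_m : leL M (a * d)^-1 m.
  apply: m_glb; rewrite /leL invgK ?mulgK // ad_sx mulgK.
  by apply/parabolic_sub/parabolic_gen; exists s.
have Me : M m^-1 by have := M_mul m_d (proj1 Dd); rewrite mulgVK.
have De : Div M delta m^-1.
  apply/(proj2 parabolic_balanced); split=> //.
  by move: delta_m; rewrite /leL /leR !invgK.
have Div_quot y : M y -> leL M m y^-1 -> Div M delta (m^-1 * y^-1).
  by move=> My my; apply: (Div_leL posM my _ De); rewrite /leL invgM !invgK mulgK.
have Nadm : N (a * d * m).
  apply: (IH Ds _ (m^-1 * x^-1) _ (Div_quot _ (proj1 Dx) m_x)).
  - by move: ad_m; rewrite /leL invgK.
  - by rewrite mulgA mulgK ad_sx mulgK.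
have -> : a = a * d * m * (m^-1 * d^-1) by rewrite mulgA mulgK mulgK.
by apply/parabolicM/parabolic_Div/(Div_quot _ (proj1 Dd) m_d).
Qed.

Lemma N_reduced_twist1 c : N_reduced M delta c -> N_reduced M delta (twist 1 c).
Proof.
have -> : twist 1 c = omega * c ^ Delta by rewrite /twist /omega conjgE !expg1 !mulgA mulgK.
move=> [Mc [_ _ c_meet]]; have Mc' : M (c ^ Delta) by apply/M_conjDelta.
split; first exact: M_mul M_omega Mc'.
split; [exact/leL1x/M_mul/Mc'/M_omega | exact/leL1x/M_delta | move=> z z_oc z_delta].
have [_ [j [omega_j z_j j_lub]]] := garside_lattice omega z.
(* With [j] the join of [omega] and [z], [Phi (omega^-1 * j)] is a common
   divisor of [c] and [delta], so [j = omega]. *)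
have j_oc : leL M j (omega * c ^ Delta).
  by apply: j_lub z_oc; rewrite /leL mulKg.
have j_Delta : leL M j Delta.
  by apply: j_lub leL_omega_Delta (leL_trans z_delta leL_delta_Delta).
have t_c : leL M ((omega^-1 * j) ^ Delta^-1) c.
  by apply/leL_conjDelta; rewrite -(leL_mul2l _ omega) mulVKg.
have t_delta : leL M ((omega^-1 * j) ^ Delta^-1) delta.
  apply/leL_conjDelta; rewrite -(leL_mul2l _ omega) mulVKg.
  by rewrite /omega conjgE mulgA mulgK mulKg.
have j_omega : leL M j omega.
  have := c_meet _ t_c t_delta; rewrite -leL_conjDelta conj1g.
  by rewrite -(leL_mul2l _ omega) mulVKg mulg1.
exact: meet_delta_omega z_delta (leL_trans z_j j_omega).
Qed.

Lemma N_reduced_twist c n : N_reduced M delta c -> N_reduced M delta (twist n c).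
Proof.
move=> red_c; elim: n => [|n IH]; first by rewrite /twist invg1 mul1g mulg1.
by rewrite -addn1 twistD; exact: N_reduced_twist1.
Qed.

Lemma unmovable_twist1 b v : N b -> ~ leL M delta b -> N_reduced M delta v ->
  unmovable M Delta (b * twist 1 v).
Proof.
move=> Nb not_delta_b [Mv [_ _ v_meet]] Delta_le.
have M_bdv : M (b * delta^-1 * v).
  by apply/M_conjDelta; move: Delta_le; rewrite /leL /twist !expg1 conjgE !mulgA.
have M_bd : M (b * delta^-1).
  have : leL M (b * delta^-1)^-1 1.
    by apply: v_meet; rewrite /leL invgK ?mulgVK //; exact: parabolic_sub.
  by rewrite leLx1 invgK.
have N_bd : N (b * delta^-1).
  by apply: parabolic_divr M_bd Div_delta_delta _; rewrite mulgVK.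
apply/not_delta_b/parabolic_sub.
by have := parabolic_conj N_bd; rewrite conjgE mulgVK.
Qed.

Lemma M_expDelta n : M (Delta ^+ n).
Proof.
elim: n => [|n IH]; first exact: pos_submonoid1.
by rewrite expgS; apply: M_mul IH; case: garside_balanced.
Qed.

Lemma Delta_leL_mul_expS x n : M x -> leL M Delta (x * Delta ^+ n.+1).
Proof.
move=> Mx; rewrite /leL (_ : _ * _ = x ^ Delta * Delta ^+ n).
  exact/M_mul/M_expDelta/M_conjDelta.
by rewrite conjgE expgS !mulgA.
Qed.

Lemma right_form_uniq alpha a a' p p' :
  right_form M Delta alpha a p -> right_form M Delta alpha a' p' -> a = a'.
Proof.
wlog le_pp' : a a' p p' / (p <= p')%Z.
  move=> wlog rf rf'; have [le | ge] := Z.le_ge_cases p p'; first exact: wlog rf rf'.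
  by apply/esym; exact: wlog rf' rf.
move=> [Ma not_Delta_a ->] [Ma' _].
have [n ->] : exists n : nat, p' = (Z.of_nat n + p)%Z by exists (Z.to_nat (p' - p)); lia.
rewrite zpowg_add_nat mulgA => /mulIg a_eq; subst a.
case: n Ma not_Delta_a => [|n] _ not_Delta_a; first by rewrite mulg1.
by case: not_Delta_a; exact: Delta_leL_mul_expS Ma'.
Qed.

End Garside.

Theorem lemma3p10 (G : groupType) (M : G -> Prop) (Delta : G)
  (H N : G -> Prop) (delta : G) (theta beta b c : G) (p k : nat) :
  garside M Delta ->
  parabolic M Delta H N delta ->
  HN_reduced M Delta delta theta ->
  ~ M theta ->
  leq 1 p ->
  right_form M Delta theta c (- Z.of_nat p)%Z ->
  H beta ->
  ~ N beta ->
  leq 1 k ->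
  right_form_N M N delta beta b (- Z.of_nat k)%Z ->
  right_form M Delta (beta * theta)
    (b * omega_prod Delta delta k * Phi_pow Delta (- Z.of_nat k)%Z c)
    (- Z.of_nat (k + p))%Z.
Proof.
move=> gar par [a [q [rf_a [red_c _]]]] _ _ rf_c _ _ k_gt0 [Nb not_delta_b ->].
have a_c := right_form_uniq gar rf_a rf_c; subst a.
case: rf_c => _ _ ->; case: k k_gt0 => // k _.
have -> : b * omega_prod Delta delta k.+1 * Phi_pow Delta (- Z.of_nat k.+1) c
    = b * twist Delta delta 1 (twist Delta delta k c).
  by rewrite Phi_pow_opp_nat -mulgA omega_prod_conj -twistD addn1.
have red_k := N_reduced_twist gar par k red_c.
have [Mk _] := N_reduced_twist1 gar par red_k.
split.
- exact: (pos_submonoidM (garside_pos gar) (parabolic_sub gar par Nb) Mk).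
- exact: (unmovable_twist1 gar par Nb not_delta_b red_k).
- by rewrite -twistD /twist !zpowg_opp_nat addn1 addnC expgnDr invgM !mulgA mulgK.
Qed.
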